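(* Let $a<b$ be real numbers, let $t_1,\ldots,t_n$ be numbers and put $s_k:=t_1^k+\cdots+t_n^k$ for $k\ge 0$ (so $s_0=n$). (i) If $t_1,\ldots,t_n$ are real numbers lying in $[a,b]$, then for every natural number $m\ge 1$ the matrix $H_m(s_0,s_1,\ldots,s_{2m-1},[a,b])$ is positive semidefinite. (ii) Conversely, suppose $t_1,\ldots,t_n$ are complex numbers such that all power sums $s_k$ are real, and let $m\ge \operatorname{rank}(R_n)$, where $R_n=(s_{i+j-2})_{i,j=1}^n$ (this rank equals the number of distinct values among the $t_i$). If $H_m(s_0,s_1,\ldots,s_{2m-1},[a,b])$ is positive semidefinite, then all $t_i$ are real and lie in $[a,b]$.
   Context: For real numbers $s_0,s_1,\ldots,s_{2m-1}$ and reals $a<b$, define the $m\times m$ matrices $R_m=(s_{i+j-2})_{i,j=1}^m$, $F_m^+(a)=(s_{i+j-1}-a\,s_{i+j-2})_{i,j=1}^m$, $F_m^-(b)=(b\,s_{i+j-2}-s_{i+j-1})_{i,j=1}^m$, and the $3m\times 3m$ block-diagonal matrix $H_m(s_0,\ldots,s_{2m-1},[a,b])=\operatorname{diag}(R_m,F_m^+(a),F_m^-(b))$. *)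

From HB Require Import structures.
From mathcomp Require Import all_boot all_order all_algebra.
From mathcomp Require Export complex.
Set Implicit Arguments. Unset Strict Implicit. Unset Printing Implicit Defensive.
Import Order.TTheory GRing.Theory Num.Theory.
Local Open Scope ring_scope.

(* Hankel matrix R_m = (s_{i+j-2})_{i,j=1..m}; with 0-based indices: s (i+j). *)
Definition hankR (R : ringType) (m : nat) (s : nat -> R) : 'M[R]_m :=
  \matrix_(i < m, j < m) s (i + j)%N.

Definition hankFp (R : ringType) (m : nat) (s : nat -> R) (a : R) : 'M[R]_m :=
  \matrix_(i < m, j < m) (s (i + j).+1 - a * s (i + j)%N).

Definition hankFm (R : ringType) (m : nat) (s : nat -> R) (b : R) : 'M[R]_m :=
  \matrix_(i < m, j < m) (b * s (i + j)%N - s (i + j).+1).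

(* H_m(s_0..s_{2m-1},[a,b]) = diag(R_m, F_m^+(a), F_m^-(b)), a 3m x 3m matrix
   (indexed by 'I_(m + (m + m))). Only s_0..s_{2m-1} are used. *)
Definition hankH (R : ringType) (m : nat) (s : nat -> R) (a b : R)
  : 'M[R]_(m + (m + m)) :=
  block_mx (hankR m s) 0 0 (block_mx (hankFp m s a) 0 0 (hankFm m s b)).

Definition psd (R : numDomainType) (k : nat) (M : 'M[R]_k) : Prop :=
  M^T = M /\ forall v : 'cV[R]_k, 0 <= (v^T *m M *m v) 0 0.

(* For s_k = \sum_j c_j t_j^k the quadratic form of the Hankel matrix (s_(i+j)) at a
   vector v is \sum_j c_j q_v(t_j)^2, q_v being the polynomial with coefficients v. The
   blocks R_m, F_m^+(a), F_m^-(b) of H_m are such Hankel matrices with weights 1, t_j - a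
   and b - t_j, which gives (i).
   For (ii), the number of distinct t_j is at most rank R_n <= m, so the Lagrange
   polynomial L of a value z = t_i on the distinct t_j is admissible. Since the power sums
   are real, the t_j are closed under conjugation. If z is not real, the imaginary part of
   L evaluates to +-i/2 at z and its conjugate and to 0 elsewhere, making the form of R_m
   negative. If z is real, the real part of L is the indicator of z, and the forms of
   F_m^+(a) and F_m^-(b) evaluate to N (z - a) and N (b - z), N being the multiplicity
   of z. *)

From HB Require Import structures.
From mathcomp Require Import all_boot all_order all_algebra.
From mathcomp Require Import complex.
From mathcomp Require Import ring.
Import Order.TTheory GRing.Theory Num.Theory.
Local Open Scope ring_scope.
Set Implicit Arguments. Unset Strict Implicit. Unset Printing Implicit Defensive.

Definition qform (K : pzRingType) m (M : 'M[K]_m) (v : 'cV[K]_m) : K :=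
  (v^T *m M *m v) 0 0.

Lemma qform_hankR (K : comNzRingType) m n (f : nat -> K) (c t : 'I_n -> K)
    (v : 'cV[K]_m) :
  (forall k, f k = \sum_j c j * t j ^+ k) ->
  qform (hankR m f) v = \sum_j c j * (\sum_(k < m) v k 0 * t j ^+ k) ^+ 2.
Proof.
move=> def_f.
transitivity (\sum_(l < m) \sum_(k < m) \sum_j v k 0 * (c j * t j ^+ (k + l)) * v l 0).
  rewrite /qform mxE; apply: eq_bigr => l _; rewrite mxE big_distrl /=.
  apply: eq_bigr => k _; rewrite !mxE def_f big_distrr big_distrl /=.
  by apply: eq_bigr.
under eq_bigr do rewrite exchange_big /=.
rewrite exchange_big /=; apply: eq_bigr => j _.
rewrite expr2 !big_distrr /=; apply: eq_bigr => l _.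
rewrite big_distrl big_distrr /=; apply: eq_bigr => k _.
rewrite exprD; ring.
Qed.

Lemma qform_block_diag (K : comNzRingType) m1 m2 (A : 'M[K]_m1) (B : 'M[K]_m2)
    (u : 'cV_m1) (w : 'cV_m2) :
  qform (block_mx A 0 0 B) (col_mx u w) = qform A u + qform B w.
Proof.
by rewrite /qform tr_col_mx mul_row_block !mulmx0 addr0 add0r mul_row_col mxE.
Qed.

Lemma map_qform (K L : nzRingType) (phi : {rmorphism K -> L}) m (M : 'M[K]_m) v :
  phi (qform M v) = qform (map_mx phi M) (map_mx phi v).
Proof.
transitivity (map_mx phi (v^T *m M *m v) 0 0); first by rewrite mxE.
by rewrite !map_mxM -map_trmx.
Qed.

Lemma map_hankR (K L : nzRingType) (phi : {rmorphism K -> L}) m (f : nat -> K) :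
  map_mx phi (hankR m f) = hankR m (phi \o f).
Proof. by apply/matrixP => i j; rewrite !mxE. Qed.

Lemma qform0 (K : pzRingType) m (M : 'M[K]_m) : qform M 0 = 0.
Proof. by rewrite /qform trmx0 !mul0mx mxE. Qed.

Definition nneg_qform (K : numDomainType) m (M : 'M[K]_m) : Prop :=
  forall v, 0 <= qform M v.

Lemma nneg_qform_ulsub (K : numDomainType) m1 m2 (A : 'M[K]_m1) (B : 'M[K]_m2) :
  nneg_qform (block_mx A 0 0 B) -> nneg_qform A.
Proof.
by move=> nnegAB u; have := nnegAB (col_mx u 0); rewrite qform_block_diag qform0 addr0.
Qed.

Lemma nneg_qform_drsub (K : numDomainType) m1 m2 (A : 'M[K]_m1) (B : 'M[K]_m2) :
  nneg_qform (block_mx A 0 0 B) -> nneg_qform B.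
Proof.
by move=> nnegAB w; have := nnegAB (col_mx 0 w); rewrite qform_block_diag qform0 add0r.
Qed.

Lemma psd_block_diag (K : numDomainType) m1 m2 (A : 'M[K]_m1) (B : 'M[K]_m2) :
  psd A -> psd B -> psd (block_mx A 0 0 B).
Proof.
move=> [symA nnegA] [symB nnegB]; split; first by rewrite tr_block_mx symA symB !trmx0.
move=> v; rewrite -(vsubmxK v); move: (qform_block_diag A B (usubmx v) (dsubmx v)).
by rewrite /qform => ->; rewrite addr_ge0.
Qed.

Lemma hankR_tr (K : nzRingType) m (f : nat -> K) : (hankR m f)^T = hankR m f.
Proof. by apply/matrixP => i j; rewrite !mxE addnC. Qed.

Lemma psd_hankR (K : realDomainType) m n (f : nat -> K) (c t : 'I_n -> K) :
  (forall j, 0 <= c j) -> (forall k, f k = \sum_j c j * t j ^+ k) ->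
  psd (hankR m f).
Proof.
move=> c_ge0 def_f; split=> [|v]; first exact: hankR_tr.
rewrite -/(qform _ v) (qform_hankR _ def_f).
by apply: sumr_ge0 => j _; rewrite mulr_ge0 ?sqr_ge0.
Qed.

Lemma power_sum_shiftl (K : comNzRingType) n (t : 'I_n -> K) (a : K) k :
  \sum_j t j ^+ k.+1 - a * \sum_j t j ^+ k = \sum_j (t j - a) * t j ^+ k.
Proof. by rewrite big_distrr -sumrB; apply: eq_bigr => j _; rewrite exprS mulrBl. Qed.

Lemma power_sum_shiftr (K : comNzRingType) n (t : 'I_n -> K) (b : K) k :
  b * \sum_j t j ^+ k - \sum_j t j ^+ k.+1 = \sum_j (b - t j) * t j ^+ k.
Proof. by rewrite big_distrr -sumrB; apply: eq_bigr => j _; rewrite exprS mulrBl. Qed.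

Lemma hankFpE (K : nzRingType) m (s : nat -> K) a :
  hankFp m s a = hankR m (fun k => s k.+1 - a * s k).
Proof. by []. Qed.

Lemma hankFmE (K : nzRingType) m (s : nat -> K) b :
  hankFm m s b = hankR m (fun k => b * s k - s k.+1).
Proof. by []. Qed.

Lemma psd_hankH_power_sums (K : realDomainType) (a b : K) n (t : 'I_n -> K) m :
  (forall j, a <= t j <= b) ->
  psd (hankH m (fun k => \sum_j t j ^+ k) a b).
Proof.
move=> t_ab; rewrite /hankH hankFpE hankFmE; apply: psd_block_diag; last apply: psd_block_diag.
- by apply: (@psd_hankR _ _ _ _ (fun=> 1) t) => // k /=; under [RHS]eq_bigr do rewrite mul1r.
- apply: (@psd_hankR _ _ _ _ (fun j => t j - a) t) => [j|k].
    by rewrite subr_ge0; case/andP: (t_ab j).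
  exact: power_sum_shiftl.
- apply: (@psd_hankR _ _ _ _ (fun j => b - t j) t) => [j|k].
    by rewrite subr_ge0; case/andP: (t_ab j).
  exact: power_sum_shiftr.
Qed.

Section Lagrange.
Variables (F : fieldType) (S : seq F).

Definition lagrange (w : F) : {poly F} :=
  let p := \prod_(x <- S | x != w) ('X - x%:P) in p.[w]^-1 *: p.

Lemma size_lagrange w : w \in S -> (size (lagrange w) <= size S)%N.
Proof.
move=> wS; apply: leq_trans (size_scale_leq _ _) _.
rewrite -big_filter size_prod_XsubC size_filter.
rewrite -(count_predC (fun x => x != w) S) -addn1 leq_add2l -has_count.
by apply/hasP; exists w => //=; rewrite negbK.
Qed.

Lemma horner_lagrange w x : w \in S -> x \in S -> (lagrange w).[x] = (x == w)%:R.
Proof.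
move=> wS xS; rewrite /lagrange hornerZ !horner_prod.
have [->|neq_xw] := eqVneq x w.
  rewrite mulVf // prodf_seq_neq0; apply/allP => y _; apply/implyP => neq_yw.
  by rewrite hornerXsubC subr_eq0 eq_sym.
apply/eqP; rewrite mulf_eq0 prodf_seq_eq0; apply/orP; right; apply/hasP.
by exists x => //; rewrite neq_xw hornerXsubC subrr eqxx.
Qed.

End Lagrange.

Local Open Scope complex_scope.

Definition poly_col (K : nzRingType) m (q : {poly K}) : 'cV[K]_m := \col_(k < m) q`_k.

Section ComplexPoly.
Variable R : rcfType.

Definition Re_poly (p : {poly R[i]}) : {poly R} := \poly_(k < size p) complex.Re p`_k.
Definition Im_poly (p : {poly R[i]}) : {poly R} := \poly_(k < size p) complex.Im p`_k.

Lemma size_Re_poly p : (size (Re_poly p) <= size p)%N.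
Proof. exact: size_poly. Qed.

Lemma size_Im_poly p : (size (Im_poly p) <= size p)%N.
Proof. exact: size_poly. Qed.

Lemma horner_Re_poly p x :
  (map_poly (real_complex R) (Re_poly p)).[x] = (p.[x] + (map_poly conjc p).[x]) / 2.
Proof.
have -> : map_poly (real_complex R) (Re_poly p) = (p + map_poly conjc p) * (2^-1)%:P.
  by apply/polyP => k; rewrite coefMC coefD !coef_map /= ReJ_add.
by rewrite hornerM hornerC hornerD.
Qed.

Lemma horner_Im_poly p x :
  (map_poly (real_complex R) (Im_poly p)).[x] =
  ((map_poly conjc p).[x] - p.[x]) * (2^-1 * 'i).
Proof.
have -> : map_poly (real_complex R) (Im_poly p) = (map_poly conjc p - p) * (2^-1 * 'i)%:P.
  by apply/polyP => k; rewrite coefMC coefB !coef_map /= ImJ_sub mulrA.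
by rewrite hornerM hornerC hornerD hornerN.
Qed.

End ComplexPoly.

Section RealPowerSums.
Variables (R : rcfType) (n : nat) (t : 'I_n -> R[i]) (s : nat -> R).
Hypothesis def_s : forall k, (s k)%:C = \sum_j t j ^+ k.

Lemma sum_horner_conjc (p : {poly R[i]}) : \sum_j p.[(t j)^*] = \sum_j p.[t j].
Proof.
under eq_bigr do rewrite (horner_coef_wide _ (leqnn (size p))).
under [RHS]eq_bigr do rewrite (horner_coef_wide _ (leqnn (size p))).
rewrite exchange_big [RHS]exchange_big /=; apply: eq_bigr => k _.
rewrite -!big_distrr /= -def_s -[in RHS](conjc_real (s k)) def_s rmorph_sum.
by congr (_ * _); apply: eq_bigr => j _; rewrite rmorphXn.
Qed.

Definition roots : seq R[i] := undup [seq t j | j <- enum 'I_n].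

Lemma mem_roots j : t j \in roots.
Proof. by rewrite mem_undup; apply/mapP; exists j; rewrite ?mem_enum. Qed.

Lemma conjc_root j : exists j', t j' = (t j)^*.
Proof.
have [/existsP [j' /eqP]|no_conj] := boolP [exists j', t j' == (t j)^*]; first by exists j'.
(* Otherwise the Lagrange polynomial of (t j)^* sums to 0 over the t_k but to a positive
   integer over their conjugates. *)
pose T := roots ++ map conjc roots.
have mem_T k : (t k \in T) && ((t k)^* \in T).
  by rewrite !mem_cat mem_roots map_f ?orbT ?mem_roots.
have := sum_horner_conjc (lagrange T (t j)^*).
have /andP[_ conj_tj_T] := mem_T j.
rewrite [RHS]big1 => [|k _]; last first.
  have /andP[tk_T _] := mem_T k; rewrite horner_lagrange //.
  by case: eqP => // eq_tk; case/existsP: no_conj; exists k; rewrite eq_tk.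
under eq_bigr => k _ do [have /andP[_ ?] := mem_T k; rewrite horner_lagrange //].
rewrite -natr_sum (bigD1 j) //= eqxx => /eqP; rewrite pnatr_eq0.
by rewrite add1n.
Qed.

Lemma size_roots_le_rank : (size roots <= \rank (hankR n s))%N.
Proof.
have size_roots : (size roots <= n)%N.
  by apply: leq_trans (size_undup _) _; rewrite size_map size_enum_ord.
have roots_u (u : 'I_(size roots)) : roots`_u \in roots := mem_nth 0 (ltn_ord u).
pose V := \matrix_(k < n, j < n) t j ^+ k.
pose A := \matrix_(u < size roots, k < n) (lagrange roots roots`_u)`_k.
have hankR_VVT : map_mx (real_complex R) (hankR n s) = V *m V^T.
  by apply/matrixP => k l; rewrite !mxE def_s; apply: eq_bigr => j _; rewrite !mxE exprD.
have AV_E : A *m V = \matrix_(u < size roots, j < n) (t j == roots`_u)%:R.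
  apply/matrixP => u j; rewrite !mxE -(horner_lagrange (roots_u u) (mem_roots j)).
  rewrite (horner_coef_wide _ (leq_trans (size_lagrange (roots_u u)) size_roots)).
  by apply: eq_bigr => k _; rewrite !mxE.
(* R_n = V V^T, and A V (A V)^T is diagonal with the multiplicities of the roots. *)
pose D := A *m V *m (A *m V)^T.
have D_diag : D = diag_mx (\row_(u < size roots) (\sum_j (t j == nth 0%R roots u) : nat)%:R).
  apply/matrixP => u w; rewrite /D AV_E !mxE.
  have [<-|neq_uw] := eqVneq u w.
    rewrite mulr1n natr_sum; apply: eq_bigr => j _; rewrite !mxE.
    by case: (t j == _); rewrite ?mulr1 ?mulr0.
  have neq_roots : roots`_u != roots`_w by rewrite nth_uniq ?undup_uniq.
  rewrite mulr0n; apply: big1 => j _; rewrite !mxE.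
  do 2 case: eqP => [|_]; rewrite ?mulr0 ?mul0r // => eq_u eq_w.
  by move: neq_roots; rewrite -eq_u -eq_w eqxx.
have D_unit : D \in unitmx.
  rewrite D_diag unitmxE det_diag unitfE; apply/prodf_neq0 => u _.
  rewrite mxE pnatr_eq0 -lt0n.
  have /mapP [j _ ->] : roots`_u \in [seq t j | j <- enum 'I_n].
    by rewrite -mem_undup roots_u.
  by rewrite (bigD1 j) //= eqxx.
rewrite -(mxrank_unit D_unit) -(mxrank_map (real_complex R)) hankR_VVT /D trmx_mul.
rewrite mulmxA -(mulmxA A).
exact: leq_trans (mxrankM_maxl _ _) (mxrankM_maxr _ _).
Qed.

Lemma qform_hankR_poly_col m (f : nat -> R) (c : 'I_n -> R[i]) (q : {poly R}) :
  (forall k, (f k)%:C = \sum_j c j * t j ^+ k) -> (size q <= m)%N ->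
  (qform (hankR m f) (poly_col m q))%:C =
  \sum_j c j * (map_poly (real_complex R) q).[t j] ^+ 2.
Proof.
move=> def_f size_q; rewrite map_qform map_hankR (qform_hankR _ def_f).
apply: eq_bigr => j _; rewrite (@horner_coef_wide _ m); last by rewrite size_map_poly.
by congr (_ * _ ^+ 2); apply: eq_bigr => k _; rewrite !mxE coef_map.
Qed.

Lemma real_power_sum_shiftl a k : (s k.+1 - a * s k)%:C = \sum_j (t j - a%:C) * t j ^+ k.
Proof. by rewrite rmorphB rmorphM /= !def_s power_sum_shiftl. Qed.

Lemma real_power_sum_shiftr b k : (b * s k - s k.+1)%:C = \sum_j (b%:C - t j) * t j ^+ k.
Proof. by rewrite rmorphB rmorphM /= !def_s power_sum_shiftr. Qed.

Variable i0 : 'I_n.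
Let z := t i0.
Let P := lagrange roots z.

Lemma size_lagrange_root : (size P <= size roots)%N.
Proof. exact/size_lagrange/mem_roots. Qed.

Lemma horner_lagrange_root j : P.[t j] = (t j == z)%:R.
Proof. exact/horner_lagrange/mem_roots/mem_roots. Qed.

Lemma horner_conj_lagrange_root j : (map_poly conjc P).[t j] = (t j == z^*)%:R.
Proof.
have [j' def_tj'] := conjc_root j.
rewrite -{1}(conjcK (t j)) horner_map -def_tj' horner_lagrange_root rmorph_nat def_tj'.
by rewrite (can2_eq (@conjcK R) (@conjcK R)).
Qed.

Lemma root_real m : (size roots <= m)%N -> nneg_qform (hankR m s) -> z^* = z.
Proof.
move=> size_m nneg_R; apply/eqP; apply: contraT => nreal_z.
pose N := (\sum_j ((t j == z) + (t j == z^*)))%N.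
have def_s1 k : (s k)%:C = \sum_j 1 * t j ^+ k.
  by rewrite def_s; under [RHS]eq_bigr do rewrite mul1r.
have size_Im := leq_trans (size_Im_poly P) (leq_trans size_lagrange_root size_m).
have /complexI qform_Im : (qform (hankR m s) (poly_col m (Im_poly P)))%:C = (- (N%:R / 4%:R))%:C.
  rewrite (qform_hankR_poly_col def_s1 size_Im) rmorphN rmorphM fmorphV !rmorph_nat /=.
  rewrite /N natr_sum mulr_suml -sumrN; apply: eq_bigr => j _ /=.
  rewrite mul1r horner_Im_poly horner_conj_lagrange_root horner_lagrange_root.
  rewrite exprMn [X in _ * X]exprMn sqr_i.
  have [->|_] := eqVneq (t j) z; first rewrite eq_sym (negbTE nreal_z) /=.
    by field.
  by case: (t j == z^*) => /=; field.
have := nneg_R (poly_col m (Im_poly P)); rewrite qform_Im oppr_ge0.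
by rewrite pmulr_lle0 ?invr_gt0 ?ltr0n // lern0 /N (bigD1 i0) //= eqxx.
Qed.

Lemma qform_hankR_Re_lagrange_root m (w : R[i] -> R[i]) (f : nat -> R) :
  (size roots <= m)%N -> z^* = z ->
  (forall k, (f k)%:C = \sum_j w (t j) * t j ^+ k) ->
  (qform (hankR m f) (poly_col m (Re_poly P)))%:C = #|[pred j | t j == z]|%:R * w z.
Proof.
move=> size_m real_z def_f.
have size_Re := leq_trans (size_Re_poly P) (leq_trans size_lagrange_root size_m).
rewrite (qform_hankR_poly_col def_f size_Re) -sumr_const mulr_suml [RHS]big_mkcond /=.
apply: eq_bigr => j _; rewrite horner_Re_poly horner_conj_lagrange_root real_z.
rewrite horner_lagrange_root inE.
have [->|_] := eqVneq (t j) z; last by rewrite add0r mul0r expr0n mulr0.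
by rewrite -mulr2n divff ?pnatr_eq0 // expr1n mulr1 mul1r.
Qed.

Lemma root_in_interval m a b : (size roots <= m)%N -> nneg_qform (hankH m s a b) ->
  exists2 x, z = x%:C & a <= x <= b.
Proof.
move=> size_m nneg_H; have nneg_R := nneg_qform_ulsub nneg_H.
have /nneg_qform_ulsub nneg_Fp := nneg_qform_drsub nneg_H.
have /nneg_qform_drsub nneg_Fm := nneg_qform_drsub nneg_H.
have real_z := root_real size_m nneg_R.
have def_z : z = (complex.Re z)%:C.
  by rewrite ReJ_add real_z; field.
exists (complex.Re z) => //; set x := complex.Re z.
have N_gt0 : (0 < #|[pred j | t j == z]|)%N by apply/card_gt0P; exists i0; rewrite inE.
have := @qform_hankR_Re_lagrange_root m (fun y => y - a%:C) _ size_m real_z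
  (real_power_sum_shiftl a).
have := @qform_hankR_Re_lagrange_root m (fun y => b%:C - y) _ size_m real_z
  (real_power_sum_shiftr b).
rewrite {2 4}def_z -!rmorphB -(rmorph_nat (real_complex R)) -!rmorphM.
move=> /complexI qform_Fm /complexI qform_Fp.
have := nneg_Fp (poly_col m (Re_poly P)); have := nneg_Fm (poly_col m (Re_poly P)).
rewrite hankFpE hankFmE qform_Fp qform_Fm !pmulr_rge0 ?ltr0n // !subr_ge0.
by move=> -> ->.
Qed.

End RealPowerSums.

Unset Implicit Arguments.

Theorem theorem3p2 (R : rcfType) (a b : R) (hab : a < b) (n : nat) :
  (forall t : 'I_n -> R,
     (forall i, a <= t i <= b) ->
     forall m : nat, (1 <= m)%N ->
       psd (hankH m (fun k => \sum_(i < n) t i ^+ k) a b)) /\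
  (forall (t : 'I_n -> R[i]) (s : nat -> R),
     (forall k, (s k)%:C%C = \sum_(i < n) t i ^+ k) ->
     forall m : nat, (\rank (hankR n s) <= m)%N ->
       psd (hankH m s a b) ->
       forall i, exists x : R, t i = x%:C%C /\ a <= x <= b).
Proof.
split=> [t t_ab m _|t s def_s m rank_m [_ nneg_H] i]; first exact: psd_hankH_power_sums.
have size_m := leq_trans (size_roots_le_rank def_s) rank_m.
by have [x] := root_in_interval def_s i size_m nneg_H; exists x.
Qed.
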